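(* Fix real $R_1,R_2\ge1$. For $Y>0$ let $\mathcal{D}_Y(N,R_1,R_2)=\bigcup_{\ell>Y}\mathcal{C}'_\ell(N,R_1,R_2)$, the union over primes $\ell>Y$. Then \[ \frac{\#\mathcal{D}_Y(N,R_1,R_2)}{N}=O\Big(\sum_{\ell>Y}\ell^{-4/3}+\frac{1}{\log N}\Big) \] for $N\ge 2$, with implied constant depending only on $R_1,R_2$.
   Context: $\mathcal{R}_{\mathbb{Z}^3}(N,R_1,R_2)=\{(a,b,c)\in\mathbb{Z}_{\ge1}^3:\ ab^{2/3}c<N,\ a/c\in[1,R_1],\ b\in[1,R_2]\}$. A triple $(a,b,c)$ of positive integers is $\ell$-carefree if $\ell^2\nmid ab$, $\ell^2\nmid bc$ and $\ell^2\nmid ca$. $\mathcal{C}'_\ell(N,R_1,R_2)$ is the set of triples in $\mathcal{R}_{\mathbb{Z}^3}(N,R_1,R_2)$ that are not $\ell$-carefree. Sums over $\ell$ are over primes. *)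

From HB Require Import structures.
From mathcomp Require Import all_boot all_order all_algebra.
From mathcomp Require Import all_classical all_reals all_analysis.
From mathcomp Require Import finmap.
Set Implicit Arguments. Unset Strict Implicit. Unset Printing Implicit Defensive.
Import Order.TTheory GRing.Theory Num.Theory numFieldNormedType.Exports.
Local Open Scope classical_set_scope.
Local Open Scope ring_scope.

Section Defs.
Variable R : realType.

Definition regionZ3 (N R1 R2 : R) : set (nat * nat * nat) :=
  [set t | let: (a, b, c) := t in
     [/\ (1 <= a)%N /\ (1 <= b)%N /\ (1 <= c)%N,
         a%:R * (b%:R `^ (2/3 : R)) * c%:R < N,
         (1 <= a%:R / c%:R :> R) /\ (a%:R / c%:R <= R1) &
         (1 <= b%:R :> R) /\ (b%:R <= R2)]].

Definition carefree (l a b c : nat) : bool :=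
  [&& ~~ (l ^ 2 %| a * b)%N, ~~ (l ^ 2 %| b * c)%N & ~~ (l ^ 2 %| c * a)%N].

Definition Cprime (l : nat) (N R1 R2 : R) : set (nat * nat * nat) :=
  [set t | regionZ3 N R1 R2 t /\ ~~ carefree l t.1.1 t.1.2 t.2].

Definition DY (Y N R1 R2 : R) : set (nat * nat * nat) :=
  \bigcup_(l in [set l : nat | prime l /\ Y < l%:R]) Cprime l N R1 R2.

Definition card3 (A : set (nat * nat * nat)) : nat := #|` fset_set A|.

Definition primeTail (Y : R) : R :=
  limn (series (fun n : nat =>
    if prime n && (Y < n%:R) then n%:R `^ (- (4/3) : R) else 0)).

End Defs.

From HB Require Import structures.
From mathcomp Require Import all_boot all_order all_algebra.
From mathcomp Require Import all_classical all_reals all_analysis.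
From mathcomp Require Import finmap ring lra.
Set Implicit Arguments. Unset Strict Implicit. Unset Printing Implicit Defensive.
Import Order.TTheory GRing.Theory Num.Theory.
Local Open Scope classical_set_scope.
Local Open Scope ring_scope.

(* If (a, b, c) is not l-carefree then l^2 divides one of a, b, c, or l divides
   two of them.  On the region, a and c are at most sqrt (R1 N) and b is at most
   R2, so each of these six divisibility patterns is met by at most R1 R2 N / l^2
   triples: #C'_l <= 6 R1 R2 N l^-2 <= 6 R1 R2 N l^(-4/3).  Only primes
   l <= sqrt (R1 N) + R2 contribute to D_Y, so #D_Y is bounded by 6 R1 R2 N times
   a partial sum of the series defining primeTail Y; that series has nonnegative
   terms and converges because (n+1)^(-4/3) <= 3 (n^(-1/3) - (n+1)^(-1/3))
   telescopes. *)

Lemma card_fsetM (T1 T2 : choiceType) (A : {fset T1}) (B : {fset T2}) :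
  #|` (A `*` B)%fset| = (#|` A| * #|` B|)%N.
Proof.
rewrite card_fset_sum1 big_imfset2 /=; last by move=> [i j] [i' j'] _ _ /= [-> ->].
rewrite (eq_bigr (fun=> #|` B|)); last first.
  by move=> i _; rewrite big_const_seq count_predT iter_addn_0 mul1n.
by rewrite big_const_seq count_predT iter_addn_0 mulnC.
Qed.

Section FiniteSets.
Variable T : choiceType.

Lemma card_fset_setX (U : choiceType) (A : set T) (B : set U) :
  finite_set A -> finite_set B ->
  #|` fset_set (A `*` B)| = (#|` fset_set A| * #|` fset_set B|)%N.
Proof. by move=> fA fB; rewrite fset_setX // card_fsetM. Qed.

Lemma card_fset_set_image_le (U : choiceType) (f : T -> U) (A : set T) :
  finite_set A -> (#|` fset_set (f @` A)| <= #|` fset_set A|)%N.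
Proof. by move=> fA; rewrite fset_set_image //; exact: leq_imfset_card. Qed.

Lemma card_fset_set_le (A B : set T) : A `<=` B -> finite_set B ->
  (#|` fset_set A| <= #|` fset_set B|)%N.
Proof.
move=> AB fB; apply: fsubset_leq_card.
by rewrite -fset_set_sub //; exact: sub_finite_set fB.
Qed.

Lemma bigsetU_finite (I : eqType) (s : seq I) (P : pred I) (F : I -> set T) :
  {in s, forall i, P i -> finite_set (F i)} ->
  finite_set (\big[setU/set0]_(i <- s | P i) F i).
Proof.
move=> fF; rewrite big_seq_cond.
elim/big_ind: _ => [|A B fA fB|i /andP[/fF]//]; first exact: finite_set0.
by rewrite finite_setU.
Qed.

Lemma card_fset_set_bigsetU (I : eqType) (s : seq I) (P : pred I) (F : I -> set T) :
  {in s, forall i, P i -> finite_set (F i)} ->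
  (#|` fset_set (\big[setU/set0]_(i <- s | P i) F i)| <=
    \sum_(i <- s | P i) #|` fset_set (F i)|)%N.
Proof.
elim: s => [|i s IHs] fF; first by rewrite !big_nil fset_set0.
have fFs : {in s, forall j, P j -> finite_set (F j)}.
  by move=> j js; apply: fF; rewrite inE js orbT.
rewrite !big_cons; case: ifP => [Pi|_]; last exact: IHs.
rewrite fset_setU; [|exact: fF (mem_head _ _) Pi|exact: bigsetU_finite].
by apply: leq_trans (leq_card_fsetU _ _).1 _; rewrite leq_add2l IHs.
Qed.
End FiniteSets.

Section Multiples.
Variable R : realType.

Definition multiples (m : nat) (X : R) : set nat :=
  [set a | [/\ (0 < a)%N, (m %| a)%N & a%:R <= X]].

Lemma multiplesE (m : nat) (X : R) : (0 < m)%N ->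
  multiples m X = (fun i => m * i.+1)%N @` `I_(Num.truncn (X / m%:R)).
Proof.
move=> m0; have m0R : (0 : R) < m%:R by rewrite ltr0n.
apply/seteqP; split => [a [a0 /dvdnP[k aE] aX] | _ [i /= iX <-]].
  subst a; have k0 : (0 < k)%N by move: a0; rewrite muln_gt0 => /andP[].
  exists k.-1; last by rewrite prednK // mulnC.
  rewrite /= prednK // truncn_ge_nat; last by rewrite divr_ge0 // (le_trans _ aX).
  by rewrite ler_pdivlMr // -natrM.
split; [by rewrite muln_gt0 m0 | exact: dvdn_mulr |].
have y1 : 1 <= X / m%:R by rewrite -truncn_gt0 (leq_ltn_trans _ iX).
move: iX; rewrite -[(i < _)%N]/(i.+1 <= _)%N truncn_ge_nat ?(le_trans ler01) //.
by rewrite ler_pdivlMr // -natrM mulnC.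
Qed.

Lemma multiples_finite (m : nat) (X : R) : (0 < m)%N -> finite_set (multiples m X).
Proof. by move=> m0; rewrite multiplesE //; exact/finite_image/finite_II. Qed.

Lemma card_multiples_le (m : nat) (X : R) : (0 < m)%N -> 0 <= X ->
  (#|` fset_set (multiples m X)|)%:R <= X / m%:R.
Proof.
move=> m0 X0; rewrite multiplesE //.
apply: le_trans (_ : (Num.truncn (X / m%:R))%:R <= _); last first.
  by rewrite truncn_le divr_ge0.
rewrite ler_nat -[X in (_ <= X)%N](card_fset_set (card_eqxx _)).
exact/card_fset_set_image_le/finite_II.
Qed.

Definition dvd_box (m : nat * nat * nat) (X Y Z : R) : set (nat * nat * nat) :=
  multiples m.1.1 X `*` multiples m.1.2 Y `*` multiples m.2 Z.

Section DvdBox.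
Variables (m : nat * nat * nat) (X Y Z : R).
Hypothesis m_gt0 : [/\ (0 < m.1.1)%N, (0 < m.1.2)%N & (0 < m.2)%N].

Lemma dvd_box_finite : finite_set (dvd_box m X Y Z).
Proof. by case: m_gt0 => *; do 2?apply: finite_setX; exact: multiples_finite. Qed.

Lemma card_dvd_box_le : 0 <= X -> 0 <= Y -> 0 <= Z ->
  (#|` fset_set (dvd_box m X Y Z)|)%:R <= X * Y * Z / (m.1.1 * m.1.2 * m.2)%:R.
Proof.
case: m_gt0 => m1 m2 m3 X0 Y0 Z0.
have [f1 f2 f3] := And3 (multiples_finite X m1) (multiples_finite Y m2)
  (multiples_finite Z m3).
rewrite card_fset_setX ?card_fset_setX //; last exact: finite_setX.
have -> : X * Y * Z / (m.1.1 * m.1.2 * m.2)%:R =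
    X / m.1.1%:R * (Y / m.1.2%:R) * (Z / m.2%:R) by rewrite !natrM !invfM; ring.
by rewrite !natrM; do 2?apply: ler_pM; rewrite ?card_multiples_le.
Qed.
End DvdBox.
End Multiples.

Section Carefree.
Local Open Scope nat_scope.
Variable l : nat.
Hypothesis l_prime : prime l.

Definition carefree_patterns : seq (nat * nat * nat) :=
  [:: (l ^ 2, 1, 1); (1, l ^ 2, 1); (1, 1, l ^ 2); (l, l, 1); (1, l, l); (l, 1, l)].

Lemma carefree_patterns_prod :
  {in carefree_patterns, forall m, m.1.1 * m.1.2 * m.2 = l ^ 2}.
Proof.
have /allP prod_eq : all (fun m => m.1.1 * m.1.2 * m.2 == l ^ 2) carefree_patterns.
  by rewrite /= !muln1 !mul1n mulnn !eqxx.
by move=> m /prod_eq/eqP.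
Qed.

Lemma carefree_patterns_gt0 :
  {in carefree_patterns, forall m, [/\ 0 < m.1.1, 0 < m.1.2 & 0 < m.2]}.
Proof.
move=> m /carefree_patterns_prod prod_eq.
have : 0 < l ^ 2 by rewrite expn_gt0 prime_gt0.
by rewrite -prod_eq !muln_gt0 => /andP[/andP[-> ->] ->].
Qed.

Lemma prime_sq_dvd_mul x y : l ^ 2 %| x * y ->
  [|| l ^ 2 %| x, l ^ 2 %| y | (l %| x) && (l %| y)].
Proof.
have cop z : ~~ (l %| z) -> coprime (l ^ 2) z by move=> lz; rewrite coprimeXl // prime_coprime.
have [lx|/cop lx] := boolP (l %| x); have [ly|/cop ly] := boolP (l %| y).
- by rewrite !orbT.
- by rewrite Gauss_dvdl // => ->.
- by rewrite Gauss_dvdr // => ->; rewrite orbT.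
- by rewrite Gauss_dvdr // => ->; rewrite orbT.
Qed.

Lemma not_carefree_pattern a b c : ~~ carefree l a b c ->
  exists2 m, m \in carefree_patterns & [/\ m.1.1 %| a, m.1.2 %| b & m.2 %| c].
Proof.
rewrite /carefree !negb_and !negbK.
have pat m : m \in carefree_patterns -> m.1.1 %| a -> m.1.2 %| b -> m.2 %| c ->
    exists2 m, m \in carefree_patterns & [/\ m.1.1 %| a, m.1.2 %| b & m.2 %| c].
  by move=> *; exists m.
case/or3P => /prime_sq_dvd_mul /or3P [h|h|/andP[h1 h2]];
  [ apply: (pat (l ^ 2, 1, 1)) | apply: (pat (1, l ^ 2, 1)) | apply: (pat (l, l, 1))
  | apply: (pat (1, l ^ 2, 1)) | apply: (pat (1, 1, l ^ 2)) | apply: (pat (1, l, l))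
  | apply: (pat (1, 1, l ^ 2)) | apply: (pat (l ^ 2, 1, 1)) | apply: (pat (l, 1, l)) ];
  by rewrite ?inE ?eqxx ?orbT ?dvd1n.
Qed.

Lemma not_carefree_dvd a b c : ~~ carefree l a b c -> [|| l %| a, l %| b | l %| c].
Proof.
have dvd_mul x y : l ^ 2 %| x * y -> (l %| x) || (l %| y).
  by rewrite -Euclid_dvdM //; apply: dvdn_trans; rewrite dvdn_exp.
rewrite /carefree !negb_and !negbK.
by case/or3P => /dvd_mul /orP[] ->; rewrite ?orbT.
Qed.
End Carefree.

Section Region.
Variables (R : realType) (N R1 R2 : R).
Hypothesis R1_ge1 : 1 <= R1.

Lemma regionZ3_bounds a b c : regionZ3 N R1 R2 (a, b, c) ->
  [/\ [/\ (0 < a)%N, (0 < b)%N & (0 < c)%N],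
      a%:R <= Num.sqrt (R1 * N), b%:R <= R2 & c%:R <= Num.sqrt (R1 * N)].
Proof.
move=> [[a1 [b1 c1]] abcN [ca aR1c] [_ bR2]].
have [a0 c0] : (0 : R) < a%:R /\ (0 : R) < c%:R by rewrite !ltr0n.
have R1_gt0 : 0 < R1 by exact: lt_le_trans ltr01 R1_ge1.
have acN : a%:R * c%:R < N.
  apply: le_lt_trans abcN; rewrite -mulrA ler_pM2l // ler_peMl ?(ltW c0) //.
  by rewrite -{1}(powRr0 b%:R) ler_powR ?ler1n // divr_ge0.
have le_sqrt (x : R) : 0 <= x -> x ^+ 2 <= R1 * N -> x <= Num.sqrt (R1 * N).
  by move=> x0 hx; rewrite -(ger0_norm x0) -sqrtr_sqr ler_wsqrtr.
rewrite ler_pdivlMr // mul1r in ca; rewrite ler_pdivrMr // in aR1c.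
split => //; apply: le_sqrt; rewrite ?ler0n // expr2.
- apply: le_trans (_ : R1 * c%:R * a%:R <= _); first by rewrite ler_pM2r.
  by rewrite -mulrA [c%:R * _]mulrC ler_pM2l // ltW.
- apply: le_trans (_ : a%:R * c%:R <= _); first by rewrite ler_pM2r.
  have N_gt0 : 0 < N by apply: lt_trans acN; rewrite mulr_gt0.
  by apply/ltW/(lt_le_trans acN); rewrite ler_peMl // ltW.
Qed.

Local Notation X := (Num.sqrt (R1 * N)).

Section CprimeFixedPrime.
Variable l : nat.
Hypothesis l_prime : prime l.

Lemma Cprime_sub_dvd_boxes :
  Cprime l N R1 R2 `<=` \big[setU/set0]_(m <- carefree_patterns l) dvd_box m X R2 X.
Proof.
move=> [[a b] c] [/regionZ3_bounds[[a0 b0 c0] aX bR2 cX]].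
case/(not_carefree_pattern l_prime) => m mP [ma mb mc].
by rewrite -bigcup_seq; exists m.
Qed.

Lemma dvd_boxes_finite :
  finite_set (\big[setU/set0]_(m <- carefree_patterns l) dvd_box m X R2 X).
Proof.
apply: bigsetU_finite => m /(carefree_patterns_gt0 l_prime) m_gt0 _.
exact: dvd_box_finite.
Qed.

Lemma Cprime_finite : finite_set (Cprime l N R1 R2).
Proof. exact: sub_finite_set Cprime_sub_dvd_boxes dvd_boxes_finite. Qed.

Lemma card_Cprime_le : 0 <= N -> 0 <= R2 ->
  (card3 (Cprime l N R1 R2))%:R <= (R1 * N * R2 / (l ^ 2)%:R) *+ 6.
Proof.
move=> N0 R2_ge0; have X0 : 0 <= X := sqrtr_ge0 _.
have XR2X : X * R2 * X = R1 * N * R2.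
  by rewrite mulrAC -expr2 sqr_sqrtr // mulr_ge0 // (le_trans ler01).
apply: le_trans (_ : (\sum_(m <- carefree_patterns l)
    #|` fset_set (dvd_box m X R2 X)|)%:R <= _).
  rewrite ler_nat; apply: leq_trans (card_fset_set_le Cprime_sub_dvd_boxes dvd_boxes_finite) _.
  apply: card_fset_set_bigsetU => m /(carefree_patterns_gt0 l_prime) m_gt0 _.
  exact: dvd_box_finite.
apply: le_trans (_ : \sum_(m <- carefree_patterns l) R1 * N * R2 / (l ^ 2)%:R <= _).
  rewrite natr_sum big_seq [leRHS]big_seq; apply: ler_sum => m mP.
  rewrite -XR2X -(carefree_patterns_prod mP).
  by case: (carefree_patterns_gt0 l_prime mP) => *; apply: card_dvd_box_le.
by rewrite big_const_seq count_predT iter_addr_0.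
Qed.

Lemma Cprime_prime_le t : Cprime l N R1 R2 t -> l%:R <= X + R2.
Proof.
case: t => [[a b] c] [/regionZ3_bounds[[a0 b0 c0] aX bR2 cX]].
have R2_ge0 : 0 <= R2 by exact: le_trans (ler0n _ _) bR2.
have X0 : 0 <= X := sqrtr_ge0 _.
have le_dvd x : (0 < x)%N -> (l %| x)%N -> l%:R <= x%:R :> R.
  by move=> x0 /dvdn_leq; rewrite ler_nat; apply.
case/(not_carefree_dvd l_prime)/or3P => /le_dvd ldvd.
- by apply: le_trans (ldvd a0) _; rewrite (le_trans aX) // lerDl.
- by apply: le_trans (ldvd b0) _; rewrite (le_trans bR2) // lerDr.
- by apply: le_trans (ldvd c0) _; rewrite (le_trans cX) // lerDl.
Qed.
End CprimeFixedPrime.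
End Region.

Section PrimeTail.
Variable R : realType.

Lemma inv_expr4_le_telescope (x y : R) : 0 < x -> 0 < y -> x ^+ 3 = y ^+ 3 + 1 ->
  (x ^+ 4)^-1 <= 3 * (y^-1 - x^-1).
Proof.
move=> x0 y0 xy3.
have yx : y < x.
  rewrite ltNge; apply/negP => xy; suff : x ^+ 3 <= y ^+ 3 by rewrite xy3; lra.
  by rewrite lerXn2r // nnegrE ltW.
have one_le : 1 <= 3 * (x - y) * x ^+ 2.
  have -> : 1 = (x - y) * (x ^+ 2 + x * y + y ^+ 2) by rewrite -[1](addKr (y ^+ 3)) -xy3; ring.
  by rewrite -mulrA mulrCA ler_pM2l ?subr_gt0 // !expr2; nra.
have -> : 3 * (y^-1 - x^-1) = 3 * (x - y) * x ^+ 2 / (x ^+ 3 * y).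
  by field; rewrite !gt_eqF.
rewrite ler_pdivlMr ?mulr_gt0 ?exprn_gt0 //; apply: le_trans one_le.
have -> : (x ^+ 4)^-1 * (x ^+ 3 * y) = y / x by field; rewrite gt_eqF.
by rewrite ler_pdivrMr // mul1r ltW.
Qed.

Lemma powR_m43_le_telescope (x : R) : 0 < x ->
  (x + 1) `^ (- (4/3)) <= 3 * (x `^ (- (1/3)) - (x + 1) `^ (- (1/3))).
Proof.
move=> x0; have x1 : 0 < x + 1 by rewrite addr_gt0.
have cube a : 0 <= a -> (a `^ (1/3)) ^+ 3 = a.
  by move=> a0; rewrite -powR_mulrn ?powR_ge0 // -powRrM mul1r mulVf ?powRr1.
have -> : (x + 1) `^ (- (4/3)) = (((x + 1) `^ (1/3)) ^+ 4)^-1.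
  by rewrite powRN -powR_mulrn ?powR_ge0 // -powRrM mul1r mulrC.
rewrite !powRN; apply: inv_expr4_le_telescope; rewrite ?powR_gt0 //.
by rewrite !cube ?ltW.
Qed.

Definition primeTail_term (Y : R) (n : nat) : R :=
  if prime n && (Y < n%:R) then n%:R `^ (- (4/3)) else 0.

Variable Y : R.

Lemma primeTail_term_ge0 n : 0 <= primeTail_term Y n.
Proof. by rewrite /primeTail_term; case: ifP => // _; exact: powR_ge0. Qed.

Lemma nondecreasing_series_primeTail_term :
  nondecreasing_seq (series (primeTail_term Y)).
Proof. by apply/nondecreasing_seqP => n; rewrite seriesSr lerDl primeTail_term_ge0. Qed.

Lemma series_primeTail_term_le_3_sub n :
  series (primeTail_term Y) n.+2 <= 3 - 3 * n.+1%:R `^ (- (1/3)).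
Proof.
elim: n => [|n IHn].
  rewrite /series /= !big_nat_recr //= big_geq // /primeTail_term /= powR1; lra.
have := powR_m43_le_telescope (ltr0Sn R n); rewrite natr1.
have : primeTail_term Y n.+2 <= n.+2%:R `^ (- (4/3)).
  by rewrite /primeTail_term; case: ifP => // _; exact: powR_ge0.
rewrite seriesSr; lra.
Qed.

Lemma series_primeTail_term_le3 n : series (primeTail_term Y) n <= 3.
Proof.
apply: le_trans (nondecreasing_series_primeTail_term (leqW (leqnSn n))) _.
apply: le_trans (series_primeTail_term_le_3_sub n) _.
by rewrite gerBl mulr_ge0 ?powR_ge0.
Qed.

Lemma series_primeTail_term_le_primeTail n : series (primeTail_term Y) n <= primeTail Y.
Proof.
apply: (nondecreasing_cvgn_le nondecreasing_series_primeTail_term).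
apply: nondecreasing_is_cvgn; first exact: nondecreasing_series_primeTail_term.
by exists 3 => _ [k _ <-]; exact: series_primeTail_term_le3.
Qed.
End PrimeTail.

Section DYBound.
Variable R : realType.

Lemma invr_sqr_le_powR_m43 (x : R) : 1 <= x -> (x ^+ 2)^-1 <= x `^ (- (4/3)).
Proof.
move=> x1; have x0 : 0 < x by exact: lt_le_trans ltr01 x1.
rewrite powRN lef_pV2 ?posrE ?powR_gt0 ?exprn_gt0 // -powR_mulrn; last exact: ltW.
by rewrite ler_powR //; lra.
Qed.

Variables (Y N R1 R2 : R).
Hypotheses (R1_ge1 : 1 <= R1) (N_ge0 : 0 <= N) (R2_ge0 : 0 <= R2).

Local Notation M := (Num.truncn (Num.sqrt (R1 * N) + R2)).+1.

Lemma DY_sub_bigsetU :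
  DY Y N R1 R2 `<=` \big[setU/set0]_(0 <= l < M | prime l && (Y < l%:R)) Cprime l N R1 R2.
Proof.
move=> t [l [l_prime Yl] Ct]; rewrite -bigcup_seq_cond; exists l => //.
have lX := Cprime_prime_le R1_ge1 l_prime Ct.
rewrite /= mem_index_iota ltnS truncn_ge_nat ?lX ?l_prime ?Yl //.
exact: le_trans (ler0n _ _) lX.
Qed.

Lemma card_DY_le : (card3 (DY Y N R1 R2))%:R <= 6 * R1 * R2 * N * primeTail Y.
Proof.
have Cfin : {in index_iota 0 M, forall l, prime l && (Y < l%:R) ->
    finite_set (Cprime l N R1 R2)}.
  by move=> l _ /andP[l_prime _]; exact: Cprime_finite.
apply: le_trans (_ : (\sum_(0 <= l < M | prime l && (Y < l%:R))
    card3 (Cprime l N R1 R2))%:R <= _).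
  rewrite ler_nat; apply: leq_trans (card_fset_set_bigsetU Cfin).
  exact: card_fset_set_le DY_sub_bigsetU (bigsetU_finite Cfin).
apply: le_trans (_ : \sum_(0 <= l < M) 6 * R1 * R2 * N * primeTail_term Y l <= _).
  rewrite natr_sum big_mkcond /=; apply: ler_sum => l _.
  rewrite /primeTail_term; case: ifP => [/andP[l_prime _]|_]; last by rewrite mulr0.
  apply: le_trans (card_Cprime_le R1_ge1 l_prime N_ge0 R2_ge0) _.
  have -> : R1 * N * R2 / (l ^ 2)%:R *+ 6 = 6 * R1 * R2 * N * (l%:R ^+ 2)^-1.
    by rewrite natrX -mulr_natl; ring.
  apply: ler_wpM2l; first by rewrite !mulr_ge0 // (le_trans ler01).
  by apply: invr_sqr_le_powR_m43; rewrite ler1n prime_gt0.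
rewrite -mulr_sumr; apply: ler_wpM2l; first by rewrite !mulr_ge0 // (le_trans ler01).
exact: series_primeTail_term_le_primeTail.
Qed.
End DYBound.

Theorem mainTheorem9 (R : realType) (R1 R2 : R) (hR1 : 1 <= R1) (hR2 : 1 <= R2) :
  exists C : R, 0 < C /\
    forall Y N : R, 0 < Y -> 2 <= N ->
      (card3 (DY Y N R1 R2))%:R / N <= C * (primeTail Y + 1 / ln N).
Proof.
have [R1_gt0 R2_gt0] : 0 < R1 /\ 0 < R2 by split; exact: lt_le_trans ltr01 _.
exists (6 * R1 * R2); split; first by rewrite !mulr_gt0.
move=> Y N _ N_ge2; have N_gt0 : 0 < N by exact: lt_le_trans _ N_ge2.
have lnN_gt0 : 0 < ln N by rewrite ln_gt0 // (lt_le_trans _ N_ge2) //; lra.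
rewrite ler_pdivrMr //; apply: le_trans (card_DY_le Y hR1 (ltW N_gt0) (ltW R2_gt0)) _.
rewrite mulrAC; apply: ler_wpM2r; first exact: ltW.
apply: ler_wpM2l; first by rewrite !mulr_ge0 // ltW.
by rewrite lerDl divr_ge0 // ltW.
Qed.
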